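(* Let $A,B,C\in\widehat{\mathbb F_q^\times}$ with $A\neq\varepsilon$, $B\ne\varepsilon$, $A\neq C$, $B\neq C$, and let $\lambda\in\mathbb F_q^\times$. Then $$2\,{}_2\mathbb P_1\!\left[\begin{matrix}A&B\\&C\end{matrix};\lambda\right]=ABC(-1)\overline A(\lambda)\,{}_2\mathbb P_1\!\left[\begin{matrix}A&A\overline C\\&A\overline B\end{matrix};\tfrac1\lambda\right]+ABC(-1)\overline B(\lambda)\frac{J(B,\overline BC)}{J(A,\overline AC)}\,{}_2\mathbb P_1\!\left[\begin{matrix}B&B\overline C\\&B\overline A\end{matrix};\tfrac1\lambda\right],$$ and $$2\,{}_2\mathbb F_1\!\left[\begin{matrix}A&B\\&C\end{matrix};\lambda\right]=ABC(-1)\overline A(\lambda)\frac{J(\overline CA,\overline BC)}{J(B,C\overline B)}\,{}_2\mathbb F_1\!\left[\begin{matrix}A&A\overline C\\&A\overline B\end{matrix};\tfrac1\lambda\right]+ABC(-1)\overline B(\lambda)\frac{J(C\overline A,\overline CB)}{J(A,\overline AC)}\,{}_2\mathbb F_1\!\left[\begin{matrix}B&B\overline C\\&B\overline A\end{matrix};\tfrac1\lambda\right].$$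
   Context: $\mathbb F_q$ is a finite field with $q$ elements, $q$ a power of an odd prime $p$. $\widehat{\mathbb F_q^\times}$ is the group of multiplicative characters $\chi:\mathbb F_q^\times\to\mathbb C^\times$; every character, including the trivial character $\varepsilon$, is extended to $\mathbb F_q$ by $\chi(0)=0$. $\overline\chi$ denotes the complex-conjugate (inverse) character, and products of characters are pointwise (e.g. $\overline AC(x)=\overline A(x)C(x)$). Jacobi sum: $J(A,B)=\sum_{x\in\mathbb F_q}A(x)B(1-x)$. Period function: ${}_2\mathbb P_1\!\left[\begin{matrix}A&B\\&C\end{matrix};\lambda\right]=\sum_{y\in\mathbb F_q}B(y)\,\overline BC(1-y)\,\overline A(1-\lambda y)$; normalized function ${}_2\mathbb F_1\!\left[\begin{matrix}A&B\\&C\end{matrix};\lambda\right]=\frac{1}{J(B,C\overline B)}\,{}_2\mathbb P_1\!\left[\begin{matrix}A&B\\&C\end{matrix};\lambda\right]$. *)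

From HB Require Import structures.
From mathcomp Require Import all_boot all_order all_algebra all_field.
Set Implicit Arguments. Unset Strict Implicit. Unset Printing Implicit Defensive.
Import Order.TTheory GRing.Theory Num.Theory.
Local Open Scope ring_scope.

(* A multiplicative character of F_q^x, with values in C (algC), extended by chi(0)=0. *)
Definition is_mchar (F : finFieldType) (chi : F -> algC) : Prop :=
  [/\ chi 0 = 0, chi 1 = 1 & forall x y : F, chi (x * y) = chi x * chi y].

Definition eps (F : finFieldType) : F -> algC := fun x => if x == 0 then 0 else 1.

(* pointwise product and complex conjugate (= inverse) of characters *)
Definition cmul (F : finFieldType) (A B : F -> algC) : F -> algC := fun x => A x * B x.
Definition cconj (F : finFieldType) (A : F -> algC) : F -> algC := fun x => (A x)^*.

Definition jacobi (F : finFieldType) (A B : F -> algC) : algC :=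
  \sum_(x : F) A x * B (1 - x).

Definition P21 (F : finFieldType) (A B C : F -> algC) (lam : F) : algC :=
  \sum_(y : F) B y * cmul (cconj B) C (1 - y) * cconj A (1 - lam * y).

Definition F21 (F : finFieldType) (A B C : F -> algC) (lam : F) : algC :=
  P21 A B C lam / jacobi B (cmul C (cconj B)).

From mathcomp Require Import all_boot all_order all_algebra all_field.
From mathcomp Require Import ring.
From Stdlib Require Import FunctionalExtensionality.
Import Order.TTheory GRing.Theory Num.Theory.
Set Implicit Arguments.
Unset Strict Implicit.
Local Open Scope ring_scope.

(* Two transformations of the period function give the theorem.  The
   substitution [y -> 1/y] expresses [P(A,B,C;lam)] through
   [P(A, A Cbar, A Bbar; 1/lam)].  The substitutions [y = r/(1+r)] and
   [x = k s/(1 + k s)] turn [J(A, Abar C) P(A,B,C;lam)] into the double sum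
   [sum_(r,s) A(s) B(r) Cbar(1 + r + s + (1-lam) r s)], which is symmetric
   in [(A,s)] and [(B,r)]; hence [J(A, Abar C) P(A,B,C) = J(B, Bbar C) P(B,A,C)].
   Writing [2 P(A,B,C)] as [P(A,B,C)] plus its symmetric counterpart and
   applying the first transformation to both gives the identities; the Jacobi
   sums involved do not vanish because [|J(X,Y)|^2] is [q] or [1]. *)

Section Characters.
Variable F : finFieldType.
Implicit Types (X Y Z : F -> algC) (x : F).

Lemma mchar_neq0 X x : is_mchar X -> x != 0 -> X x != 0.
Proof.
case=> _ X1 XM x_neq0; apply/eqP=> Xx0.
by move: (XM x x^-1); rewrite mulfV // X1 Xx0 mul0r; apply/eqP; rewrite oner_eq0.
Qed.

Lemma mcharV X x : is_mchar X -> X x^-1 = (X x)^-1.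
Proof.
move=> hX; have [X0 X1 XM] := hX.
have [->|x_neq0] := eqVneq x 0; first by rewrite invr0 X0 invr0.
apply: (mulfI (mchar_neq0 hX x_neq0)).
by rewrite -XM !mulfV ?X1 ?mchar_neq0.
Qed.

(* The values of a character are roots of unity, since [x ^+ (q - 1) = 1]. *)
Lemma mchar_conjC X x : is_mchar X -> (X x)^* = X x^-1.
Proof.
move=> hX; have [X0 X1 XM] := hX.
have [->|x_neq0] := eqVneq x 0; first by rewrite invr0 X0 conjC0.
have XX n : X (x ^+ n) = X x ^+ n by elim: n => [|n IHn]; rewrite ?exprS ?XM ?IHn.
have q1_gt0 : (0 < #|F|.-1)%N by rewrite -subn1 subn_gt0 finNzRing_gt1.
have Xx_unity : X x ^+ #|F|.-1 = 1.
  rewrite -XX; suff -> : x ^+ #|F|.-1 = 1 by [].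
  apply: (mulfI x_neq0); rewrite -exprS prednK ?expf_card ?mulr1 //.
  exact: ltnW (finNzRing_gt1 _).
have normXx : `|X x| = 1.
  by apply/eqP; rewrite -(pexpr_eq1 q1_gt0) // -normrX Xx_unity normr1.
rewrite mcharV //; apply: (mulfI (mchar_neq0 hX x_neq0)).
by rewrite -normCK normXx expr1n mulfV // mchar_neq0.
Qed.

Lemma mchar_cconj X : is_mchar X -> is_mchar (cconj X).
Proof.
case=> X0 X1 XM; split; rewrite /cconj ?X0 ?X1 ?conjC0 ?conjC1 // => x y.
by rewrite XM rmorphM.
Qed.

Lemma mchar_cmul X Y : is_mchar X -> is_mchar Y -> is_mchar (cmul X Y).
Proof.
case=> X0 X1 XM [_ Y1 YM]; split; rewrite /cmul ?X0 ?X1 ?Y1 ?mul0r ?mulr1 // => x y.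
by rewrite XM YM; ring.
Qed.

Lemma sum_mchar X : is_mchar X -> \sum_x X x = 0 \/ X = @eps F.
Proof.
move=> hX; have [X0 _ XM] := hX; set S := \sum_x X x.
have [a /andP[a_neq0 Xa_neq1]|Xtriv] := pickP [pred a | (a != 0) && (X a != 1)].
  have XaS : X a * S = S.
    rewrite mulr_sumr [RHS](reindex_inj (mulfI a_neq0)) /=.
    by apply: eq_bigr => y _; rewrite XM.
  left; apply/eqP; move/eqP: XaS; rewrite -subr_eq0 -{2}[S]mul1r -mulrBl.
  by rewrite mulf_eq0 subr_eq0 (negbTE Xa_neq1).
right; apply: functional_extensionality => x; rewrite /eps.
have [->|x_neq0] := eqVneq x 0; first by [].
by have := Xtriv x; rewrite /= x_neq0 /= => /negbFE/eqP.
Qed.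

Lemma sum_mchar_eq0 X : is_mchar X -> X <> @eps F -> \sum_x X x = 0.
Proof. by move=> /sum_mchar[]. Qed.

Lemma sum_eps_add1 : \sum_x @eps F x + 1 = #|F|%:R.
Proof.
rewrite -sumr_const (bigD1 (0 : F)) //= [RHS](bigD1 (0 : F)) //= /eps eqxx add0r addrC.
by congr (_ + _); apply: eq_bigr => x /negbTE ->.
Qed.

Lemma cmul_cconj_neq_eps X Y : is_mchar X -> is_mchar Y -> X <> Y ->
  cmul (cconj X) Y <> @eps F.
Proof.
move=> hX hY X_neq_Y XbarY_eps; apply: X_neq_Y; apply: functional_extensionality => x.
have [->|x_neq0] := eqVneq x 0; first by case: hX => ->; case: hY => ->.
move: (congr1 (fun f => f x) XbarY_eps).
rewrite /cmul /cconj /eps (negbTE x_neq0) mchar_conjC // mcharV // => XY1.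
by apply: (mulfI (invr_neq0 (mchar_neq0 hX x_neq0))); rewrite XY1 mulVf ?mchar_neq0.
Qed.

Lemma cmulC X Y : cmul X Y = cmul Y X.
Proof. by apply: functional_extensionality => x; rewrite /cmul mulrC. Qed.

Lemma cmul_cconjK X Y Z : is_mchar X -> is_mchar Z ->
  cmul (cmul X (cconj Y)) (cconj (cmul X (cconj Z))) = cmul (cconj Y) Z.
Proof.
move=> hX hZ; apply: functional_extensionality => x.
rewrite /cmul /cconj rmorphM /= conjCK.
have [->|x_neq0] := eqVneq x 0; first by case: hZ => ->; rewrite !mulr0.
rewrite (mchar_conjC x hX) mcharV //.
by field; rewrite mchar_neq0.
Qed.

End Characters.

Section JacobiSums.
Variable F : finFieldType.
Implicit Types (X Y : F -> algC) (u : F).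

Lemma subrI (c : F) : injective (fun y : F => c - y).
Proof. by move=> y z /addrI /oppr_inj. Qed.

Lemma jacobiC X Y : jacobi X Y = jacobi Y X.
Proof.
rewrite /jacobi (reindex_inj (@subrI 1)) /=; apply: eq_bigr => x _.
by rewrite mulrC (_ : 1 - (1 - x) = x) //; ring.
Qed.

(* For [u != 1], the Moebius map [y -> u + (1 - u) / (1 - y)] permutes [F]
   and sends [1] to [u]. *)
Lemma sum_mchar_moebius Y u : is_mchar Y -> \sum_x Y x = 0 ->
  \sum_y Y (1 - u * y) * Y (1 - y)^-1 = if u == 1 then \sum_x @eps F x else - Y u.
Proof.
move=> hY sumY0; have [Y0 _ YM] := hY.
have [->|u_neq1] := eqVneq u 1.
  rewrite (reindex_inj (@subrI 1)) /=; apply: eq_bigr => y _.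
  rewrite mul1r (_ : 1 - (1 - y) = y); last by ring.
  rewrite /eps; have [->|y_neq0] := eqVneq y 0; first by rewrite Y0 mul0r.
  by rewrite mcharV // mulfV // mchar_neq0.
have c_neq0 : 1 - u != 0 by rewrite subr_eq0 eq_sym.
pose m y := u + (1 - u) * (1 - y)^-1.
have m_inj : injective m by move=> y z /addrI /(mulfI c_neq0) /invr_inj /subrI.
have : \sum_y Y (m y) = 0 by rewrite -[RHS]sumY0 [RHS](reindex_inj m_inj).
rewrite (bigD1 1) //= /m subrr invr0 mulr0 addr0 => /eqP; rewrite addrC addr_eq0 => /eqP <-.
rewrite (bigD1 1) //= subrr invr0 Y0 mulr0 add0r.
apply: eq_bigr => y y_neq1; rewrite -YM; congr (Y _); field.
by rewrite subr_eq0 eq_sym.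
Qed.

Lemma jacobi_mul_conjC X Y : is_mchar X -> is_mchar Y ->
    \sum_x X x = 0 -> \sum_x Y x = 0 ->
  jacobi X Y * (jacobi X Y)^* = #|F|%:R - \sum_u X u * Y u.
Proof.
move=> hX hY sumX0 sumY0; have [X0 X1 XM] := hX; have [_ Y1 _] := hY.
rewrite /jacobi rmorph_sum /= big_distrlr /= exchange_big /=.
transitivity (\sum_u X u * \sum_y Y (1 - u * y) * Y (1 - y)^-1).
  under [RHS]eq_bigr => u _ do rewrite mulr_sumr.
  rewrite [RHS]exchange_big /=; apply: eq_bigr => y _.
  have [->|y_neq0] := eqVneq y 0.
    rewrite X0 mul0r conjC0 big1 => [|x _]; last by rewrite mulr0.
    by under eq_bigr => u _ do rewrite mulr0 subr0 invr1 Y1 !mulr1.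
  rewrite (reindex_inj (mulIf y_neq0)) /=; apply: eq_bigr => u _.
  rewrite rmorphM /= !mchar_conjC // XM mcharV //; field.
  exact: mchar_neq0.
transitivity (\sum_u X u * (if u == 1 then \sum_x @eps F x else - Y u)).
  by apply: eq_bigr => u _; rewrite sum_mchar_moebius.
rewrite (bigD1 1) //= eqxx X1 mul1r [X in _ - X](bigD1 1) //= X1 Y1 mulr1.
rewrite -sum_eps_add1 opprD addrA addrK -sumrN; congr (_ + _).
by apply: eq_bigr => u /negbTE ->; rewrite mulrN.
Qed.

Lemma jacobi_neq0 X Y : is_mchar X -> is_mchar Y -> X <> @eps F -> Y <> @eps F ->
  jacobi X Y != 0.
Proof.
move=> hX hY Xntriv Yntriv; apply/eqP => J0.
have := jacobi_mul_conjC hX hY (sum_mchar_eq0 hX Xntriv) (sum_mchar_eq0 hY Yntriv).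
rewrite J0 mul0r; case: (sum_mchar (mchar_cmul hX hY)) => [-> | XYtriv].
  rewrite subr0 => /esym/eqP; rewrite pnatr_eq0; apply/negP; rewrite -lt0n.
  exact: ltnW (finNzRing_gt1 _).
rewrite (eq_bigr _ (fun u _ => congr1 (fun f => f u) XYtriv)) -sum_eps_add1.
by rewrite addrC addKr => /esym/eqP; rewrite oner_eq0.
Qed.

Lemma jacobi_cconj_neq0 X Z : is_mchar X -> is_mchar Z -> X <> @eps F -> X <> Z ->
  jacobi X (cmul (cconj X) Z) != 0.
Proof.
move=> hX hZ Xntriv X_neq_Z; apply: jacobi_neq0 (cmul_cconj_neq_eps hX hZ X_neq_Z) => //.
exact/mchar_cmul/hZ/mchar_cconj.
Qed.

Lemma jacobi_cmul_cconj_neq0 X Y Z : is_mchar X -> is_mchar Y -> is_mchar Z ->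
    X <> Z -> Y <> Z ->
  jacobi (cmul (cconj Z) X) (cmul (cconj Y) Z) != 0.
Proof.
move=> hX hY hZ X_neq_Z Y_neq_Z.
apply: (jacobi_neq0 _ _ (cmul_cconj_neq_eps hZ hX (nesym X_neq_Z))
  (cmul_cconj_neq_eps hY hZ Y_neq_Z)); by apply: mchar_cmul => //; apply: mchar_cconj.
Qed.

End JacobiSums.

Section PeriodFunction.
Variable F : finFieldType.
Implicit Types (A B C X Y : F -> algC) (lam : F).

(* The substitution [y = r / (1 + r)]; the pole [r = -1] matches [y = 1]. *)
Lemma sum_mchar_ratio X Y (f : F -> algC) : is_mchar X -> is_mchar Y ->
  \sum_y X y * cmul (cconj X) Y (1 - y) * f y =
  \sum_r X r * Y (1 + r)^-1 * f (1 - (1 + r)^-1).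
Proof.
move=> hX hY; have [_ X1 XM] := hX; have [Y0 _ _] := hY.
have ratio_inj : injective (fun r : F => 1 - (1 + r)^-1).
  by move=> a b /subrI /invr_inj /addrI.
rewrite (reindex_inj ratio_inj) /=; apply: eq_bigr => r _.
rewrite /cmul /cconj (_ : 1 - (1 - (1 + r)^-1) = (1 + r)^-1); last by ring.
have [r1_eq0|r1_neq0] := eqVneq (1 + r) 0.
  by rewrite r1_eq0 invr0 Y0 !(mulr0, mul0r).
rewrite {1}(_ : 1 - (1 + r)^-1 = r * (1 + r)^-1); last by field.
have XwK : X (1 + r)^-1 * X (1 + r)^-1^-1 = 1 by rewrite -XM mulfV ?invr_neq0.
by rewrite XM mchar_conjC // -[RHS]mulr1 -XwK; ring.
Qed.

Lemma jacobi_cconjE X Y : is_mchar X -> is_mchar Y ->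
  jacobi X (cmul (cconj X) Y) = \sum_r X r * Y (1 + r)^-1.
Proof.
move=> hX hY; rewrite /jacobi; under eq_bigr do rewrite -[X _ * _]mulr1.
by rewrite (sum_mchar_ratio (fun _ => 1)) //; under eq_bigr do rewrite mulr1.
Qed.

Lemma jacobi_scale X Y k : is_mchar X -> is_mchar Y -> \sum_x X x = 0 ->
  X k^-1 * jacobi X (cmul (cconj X) Y) = \sum_s X s * Y (1 + k * s)^-1.
Proof.
move=> hX hY sumX0; have [X0 X1 XM] := hX; have [_ Y1 _] := hY.
have [->|k_neq0] := eqVneq k 0.
  rewrite invr0 X0 mul0r; under eq_bigr do rewrite mul0r addr0 invr1 Y1 mulr1.
  by rewrite sumX0.
rewrite jacobi_cconjE // (reindex_inj (mulfI k_neq0)) mulr_sumr /=.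
by apply: eq_bigr => s _; rewrite XM !mulrA -XM mulVf // X1 mul1r.
Qed.

Lemma jacobi_mul_P21 A B C lam : is_mchar A -> is_mchar B -> is_mchar C ->
    \sum_x A x = 0 -> \sum_x cmul (cconj C) A x = 0 ->
  jacobi A (cmul (cconj A) C) * P21 A B C lam =
  \sum_r \sum_s A s * B r * C (1 + r + s + (1 - lam) * r * s)^-1.
Proof.
move=> hA hB hC sumA0 sumCbarA0; have [C0 _ CM] := hC.
rewrite /P21 (sum_mchar_ratio (fun y => cconj A (1 - lam * y))) // mulr_sumr.
apply: eq_bigr => r _; rewrite /= [cconj A _]/cconj mchar_conjC //.
have [r1_eq0|r1_neq0] := eqVneq (1 + r) 0.
  have r_eqN1 : r = -1 by apply/eqP; rewrite -addr_eq0 addrC r1_eq0.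
  rewrite [in LHS]r1_eq0 invr0 C0 !(mulr0, mul0r).
  transitivity (B r * C lam^-1 * \sum_s cmul (cconj C) A s).
    by rewrite sumCbarA0 mulr0.
  rewrite mulr_sumr; apply: eq_bigr => s _.
  rewrite /cmul /cconj mchar_conjC // (_ : 1 + r + s + _ = lam * s).
    by rewrite invfM CM; ring.
  by rewrite r_eqN1; ring.
set k := (1 + (1 - lam) * r) / (1 + r).
rewrite (_ : 1 - lam * (1 - (1 + r)^-1) = k); last by rewrite /k; field.
rewrite mulrC -!mulrA jacobi_scale // !mulr_sumr; apply: eq_bigr => s _.
rewrite (_ : 1 + r + s + _ = (1 + r) * (1 + k * s)); last by rewrite /k; field.
by rewrite invfM CM; ring.
Qed.

Lemma jacobi_mul_P21C A B C lam : is_mchar A -> is_mchar B -> is_mchar C ->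
    A <> @eps F -> B <> @eps F -> A <> C -> B <> C ->
  jacobi A (cmul (cconj A) C) * P21 A B C lam =
  jacobi B (cmul (cconj B) C) * P21 B A C lam.
Proof.
move=> hA hB hC Antriv Bntriv A_neq_C B_neq_C.
have sumCbar0 X : is_mchar X -> X <> C -> \sum_x cmul (cconj C) X x = 0.
  move=> hX X_neq_C; apply: sum_mchar_eq0; first exact/mchar_cmul/hX/mchar_cconj.
  exact: cmul_cconj_neq_eps (nesym X_neq_C).
rewrite (jacobi_mul_P21 _ hA hB hC (sum_mchar_eq0 hA Antriv) (sumCbar0 A hA A_neq_C)).
rewrite (jacobi_mul_P21 _ hB hA hC (sum_mchar_eq0 hB Bntriv) (sumCbar0 B hB B_neq_C)).
rewrite exchange_big.
apply: eq_bigr => r _; apply: eq_bigr => s _.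
by congr (_ * C _^-1); ring.
Qed.

(* The substitution [y -> 1/y]. *)
Lemma P21_inv A B C lam : is_mchar A -> is_mchar B -> is_mchar C -> lam != 0 ->
  P21 A B C lam = A (-1) * B (-1) * C (-1) * cconj A lam *
    P21 A (cmul A (cconj C)) (cmul A (cconj B)) lam^-1.
Proof.
move=> hA hB hC lam_neq0.
have [A0 _ AM] := hA; have [B0 _ BM] := hB; have [_ _ CM] := hC.
rewrite /P21 mulr_sumr [RHS](reindex_inj invr_inj) /=; apply: eq_bigr => y _.
rewrite /cmul /cconj !rmorphM /= !conjCK !mchar_conjC // !invrK.
have [->|y_neq0] := eqVneq y 0; first by rewrite invr0 A0 B0 !(mul0r, mulr0).
have [->|y_neq1] := eqVneq y 1.
  by rewrite subrr invr0 B0 invr1 subrr A0 !(mul0r, mulr0).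
have [lamy_eq1|lamy_neq1] := eqVneq (lam * y) 1.
  rewrite -invfM lamy_eq1 invr1 subrr.
  by rewrite invr0 A0 !mulr0.
have field_side := (y_neq0, lam_neq0, subr_eq0, eq_sym (1 : F), y_neq1, lamy_neq1).
have eA : A (1 - lam * y)^-1 =
    A (-1 * lam^-1 * y^-1 * (1 - y^-1)^-1 * (1 - y^-1) * (1 - lam^-1 / y)^-1).
  by congr (A _); field; rewrite ?field_side.
have eB : B y * B (1 - y)^-1 = B (-1 * (1 - y^-1)^-1).
  by rewrite -BM; congr (B _); field; rewrite ?field_side.
have eC : C (1 - y) = C (-1 * y * (1 - y^-1)).
  by congr (C _); field; rewrite ?field_side.
rewrite mulrA eB eC eA !AM !BM !CM; ring.
Qed.

Lemma F21_cmul_cconjE A B C lam : is_mchar A -> is_mchar C ->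
  F21 A (cmul A (cconj C)) (cmul A (cconj B)) lam =
  P21 A (cmul A (cconj C)) (cmul A (cconj B)) lam
    / jacobi (cmul (cconj C) A) (cmul (cconj B) C).
Proof. by move=> hA hC; rewrite /F21 cmul_cconjK // [cmul A _]cmulC. Qed.

End PeriodFunction.

Theorem mainTheorem4 (F : finFieldType) (A B C : F -> algC) (lam : F) :
  (2 \notin [pchar F])%N ->
  is_mchar A -> is_mchar B -> is_mchar C ->
  A <> @eps F -> B <> @eps F -> A <> C -> B <> C ->
  lam != 0 ->
  let s := A (-1) * B (-1) * C (-1) in
  2 * P21 A B C lam =
    s * cconj A lam * P21 A (cmul A (cconj C)) (cmul A (cconj B)) lam^-1
    + s * cconj B lam * (jacobi B (cmul (cconj B) C) / jacobi A (cmul (cconj A) C))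
        * P21 B (cmul B (cconj C)) (cmul B (cconj A)) lam^-1
  /\
  2 * F21 A B C lam =
    s * cconj A lam * (jacobi (cmul (cconj C) A) (cmul (cconj B) C)
                       / jacobi B (cmul C (cconj B)))
      * F21 A (cmul A (cconj C)) (cmul A (cconj B)) lam^-1
    + s * cconj B lam * (jacobi (cmul C (cconj A)) (cmul (cconj C) B)
                       / jacobi A (cmul (cconj A) C))
      * F21 B (cmul B (cconj C)) (cmul B (cconj A)) lam^-1.
Proof.
move=> _ hA hB hC Antriv Bntriv A_neq_C B_neq_C lam_neq0 s.
have JA_neq0 := jacobi_cconj_neq0 hA hC Antriv A_neq_C.
have JB_neq0 := jacobi_cconj_neq0 hB hC Bntriv B_neq_C.
have KA_neq0 := jacobi_cmul_cconj_neq0 hA hB hC A_neq_C B_neq_C.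
have KB_neq0 := jacobi_cmul_cconj_neq0 hB hA hC B_neq_C A_neq_C.
have symAB := jacobi_mul_P21C lam hA hB hC Antriv Bntriv A_neq_C B_neq_C.
have invA : s * cconj A lam * P21 A (cmul A (cconj C)) (cmul A (cconj B)) lam^-1
    = P21 A B C lam by rewrite [RHS]P21_inv.
have invB : s * cconj B lam * P21 B (cmul B (cconj C)) (cmul B (cconj A)) lam^-1
    = P21 B A C lam by rewrite [RHS]P21_inv // /s; ring.
rewrite !F21_cmul_cconjE // /F21 [cmul C (cconj B)]cmulC [cmul C (cconj A)]cmulC.
rewrite (jacobiC (cmul (cconj A) C)).
set JA := jacobi A _ in JA_neq0 symAB *; set JB := jacobi B _ in JB_neq0 symAB *.
have PB_eq : P21 B A C lam = JA / JB * P21 A B C lam.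
  by apply: (mulfI JB_neq0); rewrite -symAB; field.
split.
  transitivity (P21 A B C lam + JB / JA * P21 B A C lam).
    by rewrite PB_eq; field; rewrite JA_neq0 JB_neq0.
  by rewrite -invA -invB; ring.
transitivity (P21 A B C lam / JB + P21 B A C lam / JA).
  by rewrite PB_eq; field; rewrite JA_neq0 JB_neq0.
by rewrite -invA -invB; field; rewrite JA_neq0 JB_neq0 KA_neq0 KB_neq0.
Qed.
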